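(* Assume Case 2 holds, $d=0$ and $\delta<T_{s-1}$. Then: (1) if $l_1\le1$, then $c(Q^n)=\gamma_n$ for all $n\ge1$; (2) if $l_1>1$, then $l_1^{-1}\gamma\le c(q)<\gamma$, and $l_1^{-1}\gamma_n<c(Q^n)\le\gamma_n$ for all $n\ge2$. Here $\gamma_n=\gamma\delta^{n-1}$.
   Context: Let $f(z,w)=(p(z),q(z,w))$ be a holomorphic skew product germ at the origin of $\mathbb{C}^2$ with $f(0,0)=(0,0)$, where $p(z)=a_\delta z^\delta+O(z^{\delta+1})$ with $a_\delta\neq0$ and integer $\delta\ge1$, and $q(z,w)=\sum_{i+j\ge1}b_{ij}z^iw^j$ is not identically zero. For $n\ge1$ write $f^n=(p^n,Q^n)$. For a nonzero germ $g=\sum g_{ij}z^iw^j$ let $c(g)=\min\{i+j:g_{ij}\neq0\}$. The Newton polygon $N(g)$ is the convex hull of $\bigcup_{g_{ij}\neq0}\{(x,y):x\ge i,\ y\ge j\}$. Let $(n_1,m_1),\dots,(n_s,m_s)$ be the vertices of $N(q)$ with $n_1<\cdots<n_s$, $m_1>\cdots>m_s$; for $1\le k\le s-1$ let $T_k$ be the $y$-intercept of the line through $(n_k,m_k)$ and $(n_{k+1},m_{k+1})$. Case 2 means: $s>1$ and $\delta\le T_{s-1}$; set $(\gamma,d)=(n_s,m_s)$ and $l_1=\frac{n_s-n_{s-1}}{m_{s-1}-m_s}$. *)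

From HB Require Import structures.
From mathcomp Require Import all_boot all_order all_algebra.
From mathcomp Require Import boolp reals complex.

Set Implicit Arguments.
Unset Strict Implicit.
Unset Printing Implicit Defensive.

Import Order.TTheory GRing.Theory Num.Theory.
Local Open Scope ring_scope.

(* A (formal) power series in z, w : coefficient of z^i w^j at (i, j). *)
Definition ser (K : Type) := nat -> nat -> K.

Section Series.
Variable K : comNzRingType.

Definition smul (f g : ser K) : ser K :=
  fun i j => \sum_(a < i.+1) \sum_(b < j.+1) f a b * g (i - a)%N (j - b)%N.

Definition sone : ser K := fun i j => if (i == 0%N) && (j == 0%N) then 1 else 0.

Definition sexp (f : ser K) (n : nat) : ser K := iter n (smul f) sone.

(* Composition q(A, B) for series A, B with zero constant term;
   terms with k + l > i + j do not contribute to the coefficient (i,j). *)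
Definition scomp (q A B : ser K) : ser K :=
  fun i j => \sum_(k < (i + j).+1) \sum_(l < (i + j).+1)
               q k l * smul (sexp A k) (sexp B l) i j.

Definition zser : ser K := fun i j => if (i == 1%N) && (j == 0%N) then 1 else 0.
Definition wser : ser K := fun i j => if (i == 0%N) && (j == 1%N) then 1 else 0.

Definition lift1 (p : nat -> K) : ser K := fun i j => if j == 0%N then p i else 0.

(* f^n = (p^n, Q^n) for the skew product f = (p(z), q(z,w));
   f^0 = identity, f^(n+1) = f o f^n = (p(p^n), q(p^n, Q^n)). *)
Fixpoint skew_iter (p : nat -> K) (q : ser K) (n : nat) : ser K * ser K :=
  match n with
  | 0%N => (zser, wser)
  | n'.+1 => let PQ := skew_iter p q n' in
             (scomp (lift1 p) PQ.1 PQ.2, scomp q PQ.1 PQ.2)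
  end.

Definition Qit (p : nat -> K) (q : ser K) (n : nat) : ser K := (skew_iter p q n).2.

(* c(g) = min{ i + j : g_ij <> 0 }  (convention: 0 for the zero series) *)
Definition ord_pred (g : ser K) : pred nat :=
  fun m => [exists i : 'I_m.+1, g i (m - i)%N != 0].

Definition ser_order (g : ser K) : nat :=
  match pselect (exists m, ord_pred g m) with
  | left h => ex_minn h
  | right _ => 0%N
  end.

End Series.

(* Holomorphic germ at the origin: the power series converges on some
   polydisc, i.e. its coefficients satisfy a Cauchy estimate. *)
Definition convergent2 (R : rcfType) (g : ser R[i]) : Prop :=
  exists r M : R[i], 0 < r /\ forall i j, `|g i j| * r ^+ (i + j) <= M.

Definition convergent1 (R : rcfType) (p : nat -> R[i]) : Prop :=
  exists r M : R[i], 0 < r /\ forall i, `|p i| * r ^+ i <= M.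

Section Newton.
Variables (K : nzRingType) (R : realFieldType).

Definition quadrants (g : ser K) (x y : R) : Prop :=
  exists i j : nat, g i j != 0 /\ i%:R <= x /\ j%:R <= y.

(* Newton polygon: convex hull (finite convex combinations) of the union *)
Definition newton_polygon (g : ser K) (x y : R) : Prop :=
  exists (N : nat) (lam px py : nat -> R),
    (forall k, (k < N)%N -> 0 <= lam k /\ quadrants g (px k) (py k)) /\
    \sum_(k < N) lam k = 1 /\
    x = \sum_(k < N) lam k * px k /\ y = \sum_(k < N) lam k * py k.

(* vertex = extreme point of a planar set *)
Definition is_vertex (S : R -> R -> Prop) (x y : R) : Prop :=
  S x y /\
  forall x1 y1 x2 y2 t, S x1 y1 -> S x2 y2 -> 0 < t < 1 ->
    x = t * x1 + (1 - t) * x2 -> y = t * y1 + (1 - t) * y2 ->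
    x1 = x /\ y1 = y /\ x2 = x /\ y2 = y.

End Newton.

Definition y_intercept (R : realFieldType) (a1 b1 a2 b2 : nat) : R :=
  b1%:R - a1%:R * ((b2%:R - b1%:R) / (a2%:R - a1%:R)).

From Pilot Require Import Defs.
From HB Require Import structures.
From mathcomp Require Import all_boot all_order all_algebra.
From mathcomp Require Import boolp reals complex.
From mathcomp Require Import zify ring lra.
Import Order.TTheory GRing.Theory Num.Theory.
Local Open Scope ring_scope.

Set Implicit Arguments.
Unset Strict Implicit.
Unset Printing Implicit Defensive.

(* Write g = n_s (so (g, 0) is the last vertex of N(q)), (n', m') for the
   previous vertex and h = g - n', so that l_1 = h / m' and T_(s-1) = m' g / h.
   The proof has three layers.
   1. Weighted orders of double series: if every monomial of A, B has weight
      >= ca, cb, then q(A, B) has weight >= c whenever k ca + l cb >= c on the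
      support of q (wt_bound_comp); on the axis w = 0 the lowest term of
      q(A, B) is computed exactly when one monomial of q dominates (zgap_comp).
   2. Newton polygon geometry: every monomial of q lies on or above the last
      edge, i.e. m' i + h j >= m' g (last_edge_support), and q_(g,0) != 0
      (last_vertex_coef); both come from "a support point minimising a weight
      is a vertex" and "a vertex lies below every chord".
   3. Dynamics: by induction, p^k starts at z^(delta^k) and Q^(k+1) restricted
      to w = 0 starts at z^(g delta^k), giving c(Q^(k+1)) <= g delta^k; the edge
      inequality and delta h < m' g propagate the (t,t)-weight bound
      r g delta^k for every slope r/t with r <= t and r h <= t m'.  Taking
      r = t = 1 (when h <= m') gives equality, taking (r, t) = (m', h) (when
      m' < h) gives the strict lower bound m' g delta^k < h c(Q^(k+1)) for
      k >= 1.  The main theorem only translates l_1 and T_(s-1) into these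
      integer inequalities. *)

Section WeightedOrder.
Variable K : comNzRingType.

Definition wt_bound (a b : nat) (g : ser K) (c : nat) :=
  forall i j, g i j != 0 -> (c <= a * i + b * j)%N.

Lemma wt_bound0 a b (g : ser K) : wt_bound a b g 0.
Proof. by []. Qed.

Lemma wt_bound_mul a b (f g : ser K) c1 c2 :
  wt_bound a b f c1 -> wt_bound a b g c2 -> wt_bound a b (smul f g) (c1 + c2).
Proof.
move=> hf hg i j; apply: contraR; rewrite -ltnNge => hlt; apply/eqP.
rewrite /smul big1 // => x _; rewrite big1 // => y _.
have hx : (x <= i)%N by rewrite -ltnS.
have hy : (y <= j)%N by rewrite -ltnS.
have [->|fxy] := eqVneq (f x y) 0; first by rewrite mul0r.
have [->|gxy] := eqVneq (g (i - x)%N (j - y)%N) 0; first by rewrite mulr0.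
have := hf _ _ fxy; have := hg _ _ gxy; rewrite !mulnBr.
have : (a * x <= a * i)%N by rewrite leq_mul2l hx orbT.
have : (b * y <= b * j)%N by rewrite leq_mul2l hy orbT.
lia.
Qed.

Lemma wt_bound_exp a b (f : ser K) c k :
  wt_bound a b f c -> wt_bound a b (sexp f k) (k * c).
Proof.
move=> hf; elim: k => [|k IH]; first exact: wt_bound0.
by rewrite mulSn; apply: wt_bound_mul.
Qed.

Lemma wt_bound_comp a b (q A B : ser K) ca cb c :
  wt_bound a b A ca -> wt_bound a b B cb ->
  (forall k l, q k l != 0 -> (c <= k * ca + l * cb)%N) ->
  wt_bound a b (scomp q A B) c.
Proof.
move=> hA hB hq i j; apply: contraR; rewrite -ltnNge => hlt; apply/eqP.
rewrite /scomp big1 // => k _; rewrite big1 // => l _.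
have [->|qkl] := eqVneq (q k l) 0; first by rewrite mul0r.
have hAB := wt_bound_mul (wt_bound_exp (k := k) hA) (wt_bound_exp (k := l) hB).
have [->|nz] := eqVneq (smul (sexp A k) (sexp B l) i j) 0; first by rewrite mulr0.
by have := hAB _ _ nz; have := hq _ _ qkl; lia.
Qed.

Lemma wt_bound_scale t (g : ser K) c : wt_bound 1 1 g c -> wt_bound t t g (t * c).
Proof. by move=> h i j /h; rewrite !mul1n -mulnDr leq_mul2l => ->; rewrite orbT. Qed.

Lemma ord_pred_supp (g : ser K) i j : g i j != 0 -> Defs.ord_pred g (i + j).
Proof.
by move=> h; apply/existsP; exists (@Ordinal (i + j).+1 i (leq_addr j i)); rewrite /= addKn.
Qed.

Lemma ser_order_le (g : ser K) i j : g i j != 0 -> (ser_order g <= i + j)%N.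
Proof.
move=> h; rewrite /ser_order; case: pselect => [hex|[]]; last first.
  by exists (i + j)%N; apply: ord_pred_supp h.
by case: ex_minnP => c _; apply; apply: ord_pred_supp.
Qed.

Lemma ser_order_ge (g : ser K) t c :
  (exists i j, g i j != 0) -> wt_bound t t g c -> (c <= t * ser_order g)%N.
Proof.
move=> [i0 [j0 h0]] hg; rewrite /ser_order; case: pselect => [hex|[]]; last first.
  by exists (i0 + j0)%N; apply: ord_pred_supp h0.
case: ex_minnP => c' /existsP [x hx] _.
by have := hg _ _ hx; rewrite -mulnDr subnKC // -ltnS.
Qed.

Definition zgap (g : ser K) (c : nat) := forall i, (i < c)%N -> g i 0%N = 0.

Lemma zgap0 (g : ser K) : zgap g 0.
Proof. by []. Qed.

Lemma smul_zslice (f g : ser K) i :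
  smul f g i 0 = \sum_(a < i.+1) f a 0%N * g (i - a)%N 0%N.
Proof. by apply: eq_bigr => a _; rewrite big_ord1 subn0. Qed.

Lemma zgap_mul (f g : ser K) c1 c2 : zgap f c1 -> zgap g c2 ->
  zgap (smul f g) (c1 + c2) /\ smul f g (c1 + c2)%N 0 = f c1 0%N * g c2 0%N.
Proof.
move=> hf hg; split=> [i hi|].
  rewrite smul_zslice big1 // => a _.
  have [ha|ha] := ltnP a c1; first by rewrite hf // mul0r.
  by rewrite hg ?mulr0 //; have := ltn_ord a; lia.
have hc : (c1 < (c1 + c2).+1)%N by lia.
rewrite smul_zslice (bigD1 (Ordinal hc)) //= big1 ?addr0; first by rewrite addKn.
move=> a /eqP ha; have ha' : nat_of_ord a != c1.
  by apply/eqP => e; apply: ha; apply: val_inj.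
have [lt_a|ge_a] := ltnP a c1; first by rewrite hf // mul0r.
by rewrite hg ?mulr0 //; have := ltn_ord a; move: ha' ge_a; lia.
Qed.

Lemma zgap_exp (f : ser K) c k : zgap f c ->
  zgap (sexp f k) (k * c) /\ sexp f k (k * c)%N 0 = f c 0%N ^+ k.
Proof.
move=> hf; elim: k => [|k [IH1 IH2]]; first by rewrite mul0n expr0.
by rewrite mulSn exprS -IH2; apply: zgap_mul.
Qed.

Lemma zgap_term (A B : ser K) a b k l : zgap A a -> zgap B b ->
  zgap (smul (sexp A k) (sexp B l)) (k * a + l * b) /\
  smul (sexp A k) (sexp B l) (k * a + l * b)%N 0 = A a 0%N ^+ k * B b 0%N ^+ l.
Proof.
move=> hA hB; have [zA eA] := zgap_exp k hA; have [zB eB] := zgap_exp l hB.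
by rewrite -eA -eB; apply: zgap_mul.
Qed.

Lemma zgap_comp (q A B : ser K) a b g0 : zgap A a -> zgap B b -> (0 < a)%N ->
  (forall k l, q k l != 0 -> (k, l) != (g0, 0%N) -> (g0 * a < k * a + l * b)%N) ->
  zgap (scomp q A B) (g0 * a) /\
  scomp q A B (g0 * a)%N 0 = q g0 0%N * A a 0%N ^+ g0.
Proof.
move=> hA hB ha hq.
have term0 k l i : (i < k * a + l * b)%N -> smul (sexp A k) (sexp B l) i 0 = 0.
  exact: (zgap_term k l hA hB).1.
split=> [i hi|].
  rewrite /scomp big1 // => k _; rewrite big1 // => l _.
  have [->|qkl] := eqVneq (q k l) 0; first by rewrite mul0r.
  rewrite term0 ?mulr0 //.
  have [[-> ->]|ne] := eqVneq ((k : nat), (l : nat)) (g0, 0%N); first by lia.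
  by have := hq _ _ qkl ne; lia.
have hk : (g0 < (g0 * a).+1)%N by rewrite ltnS leq_pmulr.
rewrite /scomp addn0 (bigD1 (Ordinal hk)) //= (bigD1 ord0) //=.
rewrite [X in _ + X]big1 ?addr0; last first.
  move=> k /eqP nk; rewrite big1 // => l _.
  have [->|qkl] := eqVneq (q k l) 0; first by rewrite mul0r.
  rewrite term0 ?mulr0 //; apply: hq => //; rewrite xpair_eqE.
  by apply/nandP; left; apply/eqP => e; apply: nk; apply: val_inj.
rewrite big1 ?addr0; last first.
  move=> l /eqP nl.
  have [->|qkl] := eqVneq (q g0 l) 0; first by rewrite mul0r.
  rewrite term0 ?mulr0 //; apply: hq => //; rewrite xpair_eqE eqxx /=.
  by apply/eqP => e; apply: nl; apply: val_inj.
have [_ e] := zgap_term g0 0 hA hB.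
by rewrite mul0n addn0 expr0 mulr1 in e; rewrite e.
Qed.

Lemma zser_zgap : zgap (zser K) 1 /\ zser K 1 0 = 1.
Proof. by split=> // i; rewrite ltnS leqn0 => /eqP ->. Qed.

Lemma zser_wt t : wt_bound t t (zser K) t.
Proof.
by move=> i j; rewrite /zser; case: ifP => [/andP[/eqP -> /eqP ->] _|_ /eqP//]; lia.
Qed.

Lemma wser_zgap b : zgap (wser K) b.
Proof. by move=> i _; rewrite /wser andbF. Qed.

Lemma wser_wt t : wt_bound t t (wser K) t.
Proof.
by move=> i j; rewrite /wser; case: ifP => [/andP[/eqP -> /eqP ->] _|_ /eqP//]; lia.
Qed.

End WeightedOrder.

Lemma lin_indep_zero (R : realFieldType) (a1 b1 a2 b2 X Y : R) :
  a1 * b2 != a2 * b1 -> a1 * X + b1 * Y = 0 -> a2 * X + b2 * Y = 0 ->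
  X = 0 /\ Y = 0.
Proof.
move=> hdet e1 e2; rewrite -subr_eq0 in hdet.
have hX : (a1 * b2 - a2 * b1) * X = b2 * (a1 * X + b1 * Y) - b1 * (a2 * X + b2 * Y).
  by ring.
have hY : (a1 * b2 - a2 * b1) * Y = a1 * (a2 * X + b2 * Y) - a2 * (a1 * X + b1 * Y).
  by ring.
rewrite e1 e2 !mulr0 subrr in hX hY.
by move/eqP: hX; move/eqP: hY; rewrite !mulf_eq0 (negbTE hdet) => /eqP -> /eqP ->.
Qed.

Lemma convex_comb_eq0 (R : realFieldType) (t u v : R) : 0 < t < 1 -> 0 <= u -> 0 <= v ->
  t * u + (1 - t) * v = 0 -> u = 0 /\ v = 0.
Proof. by move=> /andP[t0 t1] u0 v0 e; split; nra. Qed.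

Section NewtonPolygon.
Variables (K : nzRingType) (R : realFieldType) (q : ser K).
Local Notation NP := (@newton_polygon K R q).

Lemma newton_polygon_lb (a b c : nat) :
  (forall i j, q i j != 0 -> (c <= a * i + b * j)%N) ->
  forall x y, NP x y -> c%:R <= a%:R * x + b%:R * y.
Proof.
move=> hq x y [N [lam [px [py [hk [hsum [-> ->]]]]]]].
rewrite !mulr_sumr -big_split /=.
have -> : (c%:R : R) = \sum_(k < N) lam k * c%:R by rewrite -mulr_suml hsum mul1r.
apply: ler_sum => k _; have [hl [i [j [qij [hi hj]]]]] := hk k (ltn_ord k).
have hc : (c%:R : R) <= a%:R * px k + b%:R * py k.
  apply: (le_trans (y := (a * i + b * j)%N%:R)); first by rewrite ler_nat hq.
  by rewrite natrD !natrM; apply: lerD; apply: ler_wpM2l.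
rewrite ![_%:R * (lam k * _)]mulrCA -mulrDr.
exact: ler_wpM2l.
Qed.

Lemma newton_polygon_supp_ex x y : NP x y -> exists i j, q i j != 0.
Proof.
move=> hxy; apply: contrapT => hno.
suff : (1%:R : R) <= 0%:R * x + 0%:R * y by rewrite !mul0r addr0 ler10.
apply: newton_polygon_lb hxy => i j qij.
by exfalso; apply: hno; exists i, j.
Qed.

Lemma newton_polygon_supp i j : q i j != 0 -> NP i%:R j%:R.
Proof.
move=> h; exists 1%N, (fun _ => 1), (fun _ => i%:R), (fun _ => j%:R).
split; first by move=> k _; split => //; exists i, j.
by rewrite !big_ord1 !mul1r.
Qed.

Lemma newton_polygon_up x y e : NP x y -> 0 <= e -> NP x (y + e).
Proof.
move=> [N [lam [px [py [hk [hsum [ex ey]]]]]]] he.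
exists N, lam, px, (fun k => py k + e); split.
  move=> k hkN; have [hl [i [j [qij [hi hj]]]]] := hk k hkN.
  by split => //; exists i, j; rewrite -[j%:R]addr0 lerD.
do 2!split => //; rewrite ey.
by under [RHS]eq_bigr do rewrite mulrDr; rewrite big_split /= -mulr_suml hsum mul1r.
Qed.

Lemma vertex_of_two_weights (a b a1 b1 a2 b2 : nat) : q a b != 0 ->
  (forall i j, q i j != 0 -> (a1 * a + b1 * b <= a1 * i + b1 * j)%N) ->
  (forall i j, q i j != 0 -> (a2 * a + b2 * b <= a2 * i + b2 * j)%N) ->
  (a1 * b2 != a2 * b1)%N -> is_vertex NP a%:R b%:R.
Proof.
move=> qab h1 h2 hdet; split; first exact: newton_polygon_supp.
move=> x1 y1 x2 y2 t hA hB ht ex ey.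
(* each weight is minimal at (a, b), hence attained at both endpoints *)
have tight al be : (forall i j, q i j != 0 -> (al * a + be * b <= al * i + be * j)%N) ->
    al%:R * (x1 - a%:R) + be%:R * (y1 - b%:R) = 0 /\
    al%:R * (x2 - a%:R) + be%:R * (y2 - b%:R) = 0 :> R.
  move=> h; pose c0 : R := al%:R * a%:R + be%:R * b%:R.
  have LA := newton_polygon_lb h hA; have LB := newton_polygon_lb h hB.
  rewrite natrD !natrM -/c0 -subr_ge0 in LA; rewrite natrD !natrM -/c0 -subr_ge0 in LB.
  have hz : t * (al%:R * x1 + be%:R * y1 - c0) + (1 - t) * (al%:R * x2 + be%:R * y2 - c0) =
      al%:R * (t * x1 + (1 - t) * x2 - a%:R) + be%:R * (t * y1 + (1 - t) * y2 - b%:R).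
    by rewrite /c0; ring.
  rewrite -ex -ey !subrr !mulr0 addr0 in hz.
  have [eA eB] := convex_comb_eq0 ht LA LB hz.
  by split; [rewrite -eA | rewrite -eB]; rewrite /c0; ring.
have hdetR : a1%:R * b2%:R != a2%:R * b1%:R :> R by rewrite -!natrM eqr_nat.
have [t1A t1B] := tight _ _ h1; have [t2A t2B] := tight _ _ h2.
have [/eqP dx1 /eqP dy1] := lin_indep_zero hdetR t1A t2A.
have [/eqP dx2 /eqP dy2] := lin_indep_zero hdetR t1B t2B.
by move: dx1 dy1 dx2 dy2; rewrite !subr_eq0 => /eqP -> /eqP -> /eqP -> /eqP ->.
Qed.

Lemma min_weight_vertex (a b i j : nat) : (0 < b)%N -> q i j != 0 ->
  exists i0 j0, [/\ q i0 j0 != 0, is_vertex NP i0%:R j0%:R &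
    forall i' j', q i' j' != 0 -> (a * i0 + b * j0 <= a * i' + b * j')%N].
Proof.
move=> hb qij; pose F x y := (a * x + b * y)%N.
have exF : exists f, `[< exists x y, q x y != 0 /\ F x y = f >].
  by exists (F i j); apply/asboolP; exists i, j.
case: (ex_minnP exF) => f0 /asboolP [x0 [y0 [q0 F0]]] f0min.
have fle i' j' : q i' j' != 0 -> (f0 <= F i' j')%N.
  by move=> h; apply: f0min; apply/asboolP; exists i', j'.
have exA : exists x, `[< exists y, q x y != 0 /\ F x y = f0 >].
  by exists x0; apply/asboolP; exists y0.
case: (ex_minnP exA) => i0 /asboolP [j0 [qi0 Fi0]] i0min.
exists i0, j0; split => //; last by move=> i' j' /fle; rewrite -Fi0.
(* the second weight i0 * F + i breaks ties of F towards smaller i *)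
apply: (@vertex_of_two_weights _ _ a b (i0 * a + 1) (i0 * b) qi0).
- by move=> i' j' /fle; rewrite -Fi0.
- move=> i' j' q'.
  have e x y : ((i0 * a + 1) * x + i0 * b * y = i0 * F x y + x)%N by rewrite /F; ring.
  rewrite !e Fi0; have [eF|neF] := eqVneq (F i' j') f0.
    by rewrite eF leq_add2l; apply: i0min; apply/asboolP; exists j'.
  have lt : (f0 < F i' j')%N by rewrite ltn_neqAle eq_sym neF fle.
  have : (i0 * f0.+1 <= i0 * F i' j')%N by rewrite leq_mul2l lt orbT.
  by rewrite mulnS; lia.
- by apply/eqP; nia.
Qed.

Lemma vertex_below_chord (x y x1 y1 x2 y2 : R) :
  is_vertex NP x y -> NP x1 y1 -> NP x2 y2 -> x1 < x < x2 ->
  y * (x2 - x1) < y1 * (x2 - x) + y2 * (x - x1).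
Proof.
move=> [_ hv] h1 h2 /andP[lt1 lt2]; rewrite ltNge; apply/negP => above.
have d0 : 0 < x2 - x1 by rewrite subr_gt0 (lt_trans lt1).
pose t := (x2 - x) / (x2 - x1).
have ht0 : 0 < t by rewrite /t divr_gt0 // subr_gt0.
have ht1 : t < 1 by rewrite /t ltr_pdivrMr // mul1r ltrD2l ltrN2.
pose e := (y * (x2 - x1) - y1 * (x2 - x) - y2 * (x - x1)) / (x - x1).
have hP : NP x2 (y2 + e).
  apply: newton_polygon_up => //; rewrite /e divr_ge0 //; first lra.
  by rewrite subr_ge0 ltW.
have nz1 : x2 - x1 != 0 by rewrite gt_eqF.
have nz2 : x - x1 != 0 by rewrite subr_eq0 gt_eqF.
have ex : x = t * x1 + (1 - t) * x2 by rewrite /t; field.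
have ey : y = t * y1 + (1 - t) * (y2 + e) by rewrite /t /e; field; rewrite nz1 nz2.
have [ex1 _] := hv _ _ _ _ t h1 hP (introT andP (conj ht0 ht1)) ex ey.
by move: lt1; rewrite ex1 ltxx.
Qed.

End NewtonPolygon.

Section LastEdge.
Variables (K : nzRingType) (R : realFieldType) (q : ser K).
Variables (s : nat) (n m : nat -> nat).
Hypothesis hn : forall k, (1 <= k < s)%N -> (n k < n k.+1)%N.
Hypothesis hm : forall k, (1 <= k < s)%N -> (m k.+1 < m k)%N.
Hypothesis hvert : forall x y : R, is_vertex (newton_polygon q) x y <->
  exists2 k, (1 <= k <= s)%N & x = (n k)%:R /\ y = (m k)%:R.
Hypothesis hs : (1 < s)%N.
Hypothesis hd : m s = 0%N.

Local Notation NP := (@newton_polygon K R q).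
Local Notation g := (n s).
Local Notation n' := (n s.-1).
Local Notation m' := (m s.-1).

Lemma vertices_strict k l : (1 <= k)%N -> (k < l)%N -> (l <= s)%N ->
  (n k < n l)%N /\ (m l < m k)%N.
Proof.
move=> hk hkl hls; pose D := [pred i | 1 <= i <= s]%N.
have convD : {in D &, forall i j x, (i < x < j)%N -> x \in D}.
  by move=> i j hi hj x; move: hi hj; rewrite /D !inE; lia.
have kD : k \in D by rewrite /D inE; lia.
have lD : l \in D by rewrite /D inE; lia.
have step_n : {in D, forall i, i.+1 \in D -> (n i < n i.+1)%N}.
  by move=> i; rewrite /D !inE => hi hi1; apply: hn; lia.
have step_m : {in D, forall i, i.+1 \in D -> (m i.+1 < m i)%N}.
  by move=> i; rewrite /D !inE => hi hi1; apply: hm; lia.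
split; first exact: (homo_ltn_in ltn_trans convD step_n) k l kD lD hkl.
have trans_gt : forall y x z, (y < x)%N -> (z < y)%N -> (z < x)%N.
  by move=> y x z hxy hyz; apply: ltn_trans hxy.
exact: (homo_ltn_in (r := fun a b => b < a)%N trans_gt convD step_m) k l kD lD hkl.
Qed.

Lemma vertex_index (a b : nat) : is_vertex NP a%:R b%:R ->
  exists2 k, (1 <= k <= s)%N & a = n k /\ b = m k.
Proof.
move=> /hvert [k hk [/eqP ea /eqP eb]].
by exists k => //; move: ea eb; rewrite !eqr_nat => /eqP -> /eqP ->.
Qed.

Lemma vertex_at k : (1 <= k <= s)%N -> is_vertex NP (n k)%:R (m k)%:R.
Proof. by move=> hk; apply/hvert; exists k. Qed.

Lemma last_vertex_in : NP g%:R 0.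
Proof. by have [+ _] := vertex_at (k := s) ltac:(lia); rewrite hd. Qed.

Lemma last_edge_support i j : q i j != 0 -> (m' * g <= m' * i + (g - n') * j)%N.
Proof.
move=> qij; rewrite leqNgt; apply/negP => below.
have [ltn' ltm'] : (n' < g)%N /\ (0 < m')%N.
  by rewrite -hd; apply: vertices_strict; lia.
(* a vertex (n_k, m_k) minimising m' i + (g - n') j lies strictly below the edge *)
have hw : (0 < g - n')%N by rewrite subn_gt0.
have [a0 [j0 [qa0 hv hmin]]] := min_weight_vertex R m' hw qij.
have [k hk [ea eb]] := vertex_index hv; rewrite {}ea {}eb in qa0 hv hmin.
have lowF := leq_ltn_trans (hmin _ _ qij) below.
(* so it is neither endpoint of the last edge, hence lies to the left of n' *)
have hks : (k < s.-1)%N.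
  rewrite ltnNge; apply/negP => hk1.
  have [ek|ek] : k = s.-1 \/ k = s by lia.
    by move: lowF; rewrite ek [((g - n') * _)%N]mulnC -mulnDr subnKC ?ltnn // ltnW.
  by move: lowF; rewrite ek hd muln0 addn0 ltnn.
have [ltnk _] := vertices_strict (k := k) (l := s.-1) (andP hk).1 hks ltac:(lia).
(* then (n', m') would lie above the chord from (n_k, m_k) to (g, 0) *)
have := vertex_below_chord (vertex_at (k := s.-1) ltac:(lia)) hv.1 last_vertex_in.
rewrite !ltr_nat ltnk ltn' mul0r addr0 => /(_ isT).
rewrite -[X in _ * X < _]natrB; last exact: ltnW (ltn_trans ltnk ltn').
rewrite -[X in _ < _ * X]natrB ?(ltnW ltn') // -!natrM ltr_nat.
rewrite mulnBr [(m k * _)%N]mulnC.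
by move: lowF; lia.
Qed.

Lemma last_vertex_coef : q g 0 != 0.
Proof.
have [i [j qij]] := newton_polygon_supp_ex last_vertex_in.
(* the lowest monomial of least i is a vertex; it lies on the axis since (g, 0) is in N(q) *)
have [a0 [j0 [qa0 hv hmin]]] := min_weight_vertex R 0 (b := 1) isT qij.
have j00 : j0 = 0%N.
  have hlow : forall i' j', q i' j' != 0 -> (j0 <= 0 * i' + 1 * j')%N.
    by move=> i' j' /hmin; rewrite !mul0n !mul1n.
  have := newton_polygon_lb hlow last_vertex_in.
  by rewrite mulr0n mul0r add0r mulr0 lern0 => /eqP.
(* and the only vertex on the axis is the last one *)
have [k /andP[hk1 hks] [ea eb]] := vertex_index hv.
have ek : k = s.
  apply/eqP; rewrite eqn_leq hks leqNgt; apply/negP => lt.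
  by have [_] := vertices_strict hk1 lt (leqnn s); rewrite hd -eb j00 ltnn.
by move: qa0; rewrite ea j00 ek.
Qed.

(* When the last edge is steeper than slope -1 (m' < g - n'), the order of q
   is below n_s: the vertex (n', m') has degree n' + m' < n_s. *)
Lemma low_degree_monomial : (m' < g - n')%N -> exists i j, q i j != 0 /\ (i + j < g)%N.
Proof.
move=> steep; apply: contrapT => hno.
have hge : forall i j, q i j != 0 -> (g <= 1 * i + 1 * j)%N.
  move=> i j qij; rewrite !mul1n leqNgt; apply/negP => lt.
  by apply: hno; exists i, j.
have := newton_polygon_lb hge (vertex_at (k := s.-1) ltac:(lia)).1.
rewrite !mul1r -natrD ler_nat.
have [ltn' _] := vertices_strict (k := s.-1) (l := s) ltac:(lia) ltac:(lia) (leqnn s).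
by lia.
Qed.

End LastEdge.

Lemma Qit_S (K : comNzRingType) (p : nat -> K) (q : ser K) k :
  Qit p q k.+1 = scomp q (skew_iter p q k).1 (Qit p q k).
Proof. by []. Qed.

(* The iterates, assuming only the two facts about q extracted above: its
   monomials lie on or above the line m' i + h j = m' g, and q_(g,0) != 0;
   together with delta h < m' g, i.e. delta < T_(s-1). *)
Section Dynamics.
Variables (K : idomainType) (p : nat -> K) (delta : nat) (q : ser K) (g m' h : nat).
Hypothesis hdelta : (1 <= delta)%N.
Hypothesis hm' : (0 < m')%N.
Hypothesis hq_edge : forall i j, q i j != 0 -> (m' * g <= m' * i + h * j)%N.
Hypothesis hT : (delta * h < m' * g)%N.
Hypothesis hp_low : forall k, (k < delta)%N -> p k = 0.
Hypothesis hp_lead : p delta != 0.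
Hypothesis hqg : q g 0 != 0.

Local Notation P k := (skew_iter p q k).1.
Local Notation Q k := (Qit p q k).

(* The key inequality: for r <= t, one step of the recursion turns the
   weights (t delta e) on z and (r g e) on w into the weight r g delta e. *)
Lemma edge_step_le t r e k l : (r <= t)%N -> q k l != 0 ->
  (r * g * (delta * e) <= k * (t * (delta * e)) + l * (r * g * e))%N.
Proof.
move=> hrt qkl; rewrite -(leq_pmul2l hm').
have h1 : (r * delta * e * (m' * g) <= r * delta * e * (m' * k + h * l))%N.
  by rewrite leq_mul2l hq_edge ?orbT.
have h2 : (r * l * e * (delta * h) <= r * l * e * (m' * g))%N.
  by rewrite leq_mul2l ltnW ?orbT.
have h3 : (m' * k * delta * e * r <= m' * k * delta * e * t)%N.
  by rewrite leq_mul2l hrt orbT.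
nia.
Qed.

Lemma edge_step_lt t r e k l : (0 < r <= t)%N -> (0 < e)%N -> q k l != 0 ->
  ((k, l) != (g, 0%N)) || (r < t)%N ->
  (r * g * (delta * e) < k * (t * (delta * e)) + l * (r * g * e))%N.
Proof.
move=> /andP[hr hrt] he qkl hstrict; have hde : (0 < delta * e)%N by rewrite muln_gt0 hdelta.
case: l qkl hstrict => [|l] qkl hstrict.
  have hgk : (g <= k)%N by have := hq_edge qkl; rewrite muln0 addn0 leq_pmul2l.
  have hg : (0 < g)%N by case: (posnP g) hT => [->|//]; rewrite muln0.
  have lt : (r * g < t * k)%N.
    have [ltgk|eqgk] := ltnP g k.
      by apply: (leq_trans (n := r * k)); rewrite ?ltn_pmul2l ?leq_mul2r ?hrt ?orbT.
    have ek : k = g by apply/eqP; rewrite eqn_leq eqgk hgk.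
    by move: hstrict; rewrite ek eqxx /= => ltrt; rewrite ltn_pmul2r.
  by rewrite mul0n addn0 [(k * _)%N]mulnA [(k * t)%N]mulnC ltn_pmul2r.
have h1 : (r * delta * e * (m' * g) <= r * delta * e * (m' * k + h * l.+1))%N.
  by rewrite leq_mul2l hq_edge ?orbT.
have h2 : (r * l.+1 * e * (delta * h) < r * l.+1 * e * (m' * g))%N.
  by rewrite ltn_pmul2l // !muln_gt0 hr he.
have h3 : (m' * k * delta * e * r <= m' * k * delta * e * t)%N.
  by rewrite leq_mul2l hrt orbT.
rewrite -(ltn_pmul2l hm'); nia.
Qed.

Lemma lift1_support k l : lift1 p k l != 0 -> l = 0%N /\ (delta <= k)%N.
Proof.
rewrite /lift1; have [-> pk|_] := eqVneq l 0%N; last by rewrite eqxx.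
by split => //; rewrite leqNgt; apply: contra pk => /hp_low ->.
Qed.

Lemma P_iter k :
  [/\ zgap (P k) (delta ^ k), P k (delta ^ k)%N 0 != 0 & wt_bound 1 1 (P k) (delta ^ k)].
Proof.
elim: k => [|k [zP nzP wtP]].
  by have [z1 e1] := zser_zgap K; rewrite expn0 /= e1 oner_neq0; split=> //; apply: zser_wt.
have hdk : (0 < delta ^ k)%N by rewrite expn_gt0 hdelta.
have lead k' l : lift1 p k' l != 0 -> (k', l) != (delta, 0%N) ->
    (delta * delta ^ k < k' * delta ^ k + l * 0)%N.
  move=> /lift1_support [-> hk'] hne; rewrite muln0 addn0 ltn_pmul2r //.
  by rewrite ltn_neqAle hk' andbT; apply: contraNneq hne => ->.
have [z e] := zgap_comp zP (zgap0 (Q k)) hdk lead.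
rewrite expnS /=; split=> //; first by rewrite e mulf_neq0 ?expf_neq0 // /lift1 eqxx.
have low k' l : lift1 p k' l != 0 -> (delta * delta ^ k <= k' * delta ^ k + l * 0)%N.
  by move=> /lift1_support [-> hk']; rewrite muln0 addn0 leq_mul2r hk' orbT.
exact: wt_bound_comp wtP (@wt_bound0 _ 1 1 (Q k)) low.
Qed.

Lemma Q_zslice k : zgap (Q k.+1) (g * delta ^ k) /\ Q k.+1 (g * delta ^ k)%N 0 != 0.
Proof.
elim: k => [|k [zQ nzQ]].
  have [zP nzP _] := P_iter 0; rewrite expn0 in zP nzP *.
  have lead k' l : q k' l != 0 -> (k', l) != (g, 0%N) -> (g * 1 < k' * 1 + l * g.+1)%N.
    move=> qkl hne; rewrite !muln1; case: l qkl hne => [|l] qkl hne; last by nia.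
    have := hq_edge qkl; rewrite muln0 addn0 leq_pmul2l // addn0 leq_eqVlt.
    by case/predU1P => // eg; move: hne; rewrite eg eqxx.
  have [z e] := zgap_comp zP (@wser_zgap _ g.+1) isT lead.
  by rewrite muln1 /= in z e *; split=> //; rewrite /Qit /= e mulf_neq0 ?expf_neq0.
have [zP nzP _] := P_iter k.+1.
have hdk : (0 < delta ^ k)%N by rewrite expn_gt0 hdelta.
have lead k' l : q k' l != 0 -> (k', l) != (g, 0%N) ->
    (g * delta ^ k.+1 < k' * delta ^ k.+1 + l * (g * delta ^ k))%N.
  move=> qkl hne; have := @edge_step_lt 1 1 _ _ _ isT hdk qkl; rewrite hne !mul1n -expnS.
  exact.
have [z e] := zgap_comp zP zQ ltac:(by rewrite expn_gt0 hdelta) lead.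
by split=> //; rewrite Qit_S e mulf_neq0 ?expf_neq0.
Qed.

Lemma Q_nonzero k : exists i j, Q k.+1 i j != 0.
Proof. by exists (g * delta ^ k)%N, 0%N; apply: (Q_zslice k).2. Qed.

Lemma Q_order_le k : (ser_order (Q k.+1) <= g * delta ^ k)%N.
Proof. by have := ser_order_le (Q_zslice k).2; rewrite addn0. Qed.

Lemma Q_wt_bound t r : (0 < r <= t)%N -> (r * h <= t * m')%N ->
  forall k, wt_bound t t (Q k.+1) (r * g * delta ^ k).
Proof.
move=> /andP[hr hrt] hrw; elim=> [|k IH].
  have low k' l : q k' l != 0 -> (r * g * delta ^ 0 <= k' * t + l * t)%N.
    move=> qkl; rewrite expn0 muln1 -(leq_pmul2l hm').
    have h1 : (r * (m' * g) <= r * (m' * k' + h * l))%N by rewrite leq_mul2l hq_edge ?orbT.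
    have h2 : (m' * k' * r <= m' * k' * t)%N by rewrite leq_mul2l hrt orbT.
    have h3 : (l * (r * h) <= l * (t * m'))%N by rewrite leq_mul2l hrw orbT.
    lia.
  by rewrite Qit_S; exact: wt_bound_comp (@zser_wt K t) (@wser_wt K t) low.
have [_ _ wtP] := P_iter k.+1.
have low k' l : q k' l != 0 ->
    (r * g * delta ^ k.+1 <= k' * (t * delta ^ k.+1) + l * (r * g * delta ^ k))%N.
  by move=> qkl; rewrite expnS; apply: edge_step_le.
by rewrite Qit_S; exact: wt_bound_comp (wt_bound_scale t wtP) IH low.
Qed.

Lemma Q_wt_bound_strict t r : (0 < r < t)%N -> (r * h <= t * m')%N ->
  forall k, wt_bound t t (Q k.+2) (r * g * delta ^ k.+1).+1.
Proof.
move=> /andP[hr hrt] hrw k; have [_ _ wtP] := P_iter k.+1.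
have hdk : (0 < delta ^ k)%N by rewrite expn_gt0 hdelta.
have low k' l : q k' l != 0 ->
    ((r * g * delta ^ k.+1).+1 <= k' * (t * delta ^ k.+1) + l * (r * g * delta ^ k))%N.
  move=> qkl; rewrite expnS; apply: edge_step_lt => //; last by rewrite hrt orbT.
  by rewrite hr ltnW.
rewrite Qit_S; apply: wt_bound_comp (wt_bound_scale t wtP) _ low.
by apply: Q_wt_bound => //; rewrite hr ltnW.
Qed.

Lemma Q_order_eq : (h <= m')%N -> forall k, ser_order (Q k.+1) = (g * delta ^ k)%N.
Proof.
move=> flat k; apply/eqP; rewrite eqn_leq Q_order_le /=.
have := ser_order_ge (Q_nonzero k) (@Q_wt_bound 1 1 isT _ k).
by rewrite !mul1n; apply.
Qed.

Lemma Q_order_gt : (m' < h)%N -> forall k,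
  (m' * (g * delta ^ k.+1) < h * ser_order (Q k.+2))%N.
Proof.
move=> steep k; have slope : (0 < m' < h)%N by rewrite hm' steep.
have := @Q_wt_bound_strict h m' slope ltac:(by rewrite mulnC) k.
by rewrite mulnA; apply: ser_order_ge (Q_nonzero k.+1).
Qed.

Lemma q_order_ge : (m' <= h)%N -> (m' * g <= h * ser_order q)%N.
Proof.
move=> steep; apply: ser_order_ge; first by exists g, 0%N; exact: hqg.
move=> i j qij; have := hq_edge qij.
have : (m' * i <= h * i)%N by rewrite leq_mul2r steep orbT.
by lia.
Qed.

End Dynamics.

Lemma y_intercept_last_edge (R : realFieldType) (a b g : nat) : (a < g)%N ->
  y_intercept R a b g 0 = (b * g)%:R / (g - a)%:R.
Proof.
move=> ltag; have nz : (g - a)%:R != 0 :> R by rewrite pnatr_eq0 subn_eq0 -ltnNge.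
rewrite /y_intercept natrB ?(ltnW ltag) // in nz *.
by rewrite natrM; field; exact: nz.
Qed.

Lemma ratio_inv_le (R : realFieldType) (a b c d : nat) : (0 < a)%N -> (0 < b)%N ->
  ((a%:R / b%:R)^-1 * c%:R <= d%:R :> R) = (b * c <= a * d)%N.
Proof.
move=> ha hb; rewrite invf_div mulrAC ler_pdivrMr ?ltr0n //.
by rewrite -!natrM ler_nat (mulnC d).
Qed.

Lemma ratio_inv_lt (R : realFieldType) (a b c d : nat) : (0 < a)%N -> (0 < b)%N ->
  ((a%:R / b%:R)^-1 * c%:R < d%:R :> R) = (b * c < a * d)%N.
Proof.
move=> ha hb; rewrite invf_div mulrAC ltr_pdivrMr ?ltr0n //.
by rewrite -!natrM ltr_nat (mulnC d).
Qed.

Unset Implicit Arguments.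

Theorem theorem4p3 (R : realType)
  (* p(z) = a_delta z^delta + O(z^(delta+1)), a_delta <> 0, delta >= 1 *)
  (p : nat -> R[i]) (delta : nat)
  (hdelta : (1 <= delta)%N)
  (hp_low : forall k, (k < delta)%N -> p k = 0)
  (hp_lead : p delta != 0)
  (hp_conv : convergent1 p)
  (* q(z,w) = sum_{i+j>=1} b_ij z^i w^j, not identically zero *)
  (q : ser R[i])
  (hq0 : q 0%N 0%N = 0)
  (hq_nz : exists i j, q i j != 0)
  (hq_conv : convergent2 q)
  (* vertices (n_1,m_1),...,(n_s,m_s) of N(q), n increasing, m decreasing *)
  (s : nat) (n m : nat -> nat)
  (hn : forall k, (1 <= k < s)%N -> (n k < n k.+1)%N)
  (hm : forall k, (1 <= k < s)%N -> (m k.+1 < m k)%N)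
  (hvert : forall x y : R,
     is_vertex (newton_polygon q) x y <->
     exists2 k, (1 <= k <= s)%N & x = (n k)%:R /\ y = (m k)%:R)
  (* Case 2 *)
  (hs : (1 < s)%N)
  (hcase2 : delta%:R <= y_intercept R (n s.-1) (m s.-1) (n s) (m s))
  (* d = 0 and delta < T_{s-1} *)
  (hd : m s = 0%N)
  (hT : delta%:R < y_intercept R (n s.-1) (m s.-1) (n s) (m s)) :
  let gamma := n s in
  let l1 : R := ((n s)%:R - (n s.-1)%:R) / ((m s.-1)%:R - (m s)%:R) in
  let gamma_ k := (gamma * delta ^ k.-1)%N in
  (l1 <= 1 -> forall k, (1 <= k)%N -> ser_order (Qit p q k) = gamma_ k) /\
  (1 < l1 ->
     (l1^-1 * gamma%:R <= (ser_order q)%:R /\ (ser_order q < gamma)%N) /\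
     (forall k, (2 <= k)%N ->
        l1^-1 * (gamma_ k)%:R < (ser_order (Qit p q k))%:R /\
        (ser_order (Qit p q k) <= gamma_ k)%N)).
Proof.
move=> gamma l1 gamma_.
have [ltn' ltm'] := vertices_strict hn hm hs hd (k := s.-1) (l := s) ltac:(lia) ltac:(lia)
  (leqnn s).
rewrite hd in ltm'.
set g := n s in ltn' gamma gamma_ *.
set n' := n s.-1 in ltn' hT *; set m' := m s.-1 in ltm' hT *.
set h := (g - n')%N.
have hl1 : l1 = h%:R / m'%:R by rewrite /l1 hd subr0 natrB // (ltnW ltn').
have hT' : (delta * h < m' * g)%N.
  move: hT; rewrite hd y_intercept_last_edge // ltr_pdivlMr ?ltr0n ?subn_gt0 //.
  by rewrite -natrM ltr_nat mulnC.
have hedge := last_edge_support hn hm hvert hs hd.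
have hqg := last_vertex_coef hn hm hvert hs hd.
split.
  move=> flat [|k] // _; rewrite hl1 ler_pdivrMr ?ltr0n // mul1r ler_nat in flat.
  exact: (Q_order_eq hdelta ltm' hedge hT' hp_low hp_lead hqg flat).
rewrite hl1 ltr_pdivlMr ?ltr0n // mul1r ltr_nat => steep.
split.
  rewrite ratio_inv_le ?subn_gt0 //; split.
    exact: (q_order_ge hdelta ltm' hedge hT' hp_lead hqg (ltnW steep)).
  have [i [j [qij lt]]] := low_degree_monomial hn hm hvert hs hd steep.
  exact: leq_ltn_trans (ser_order_le qij) lt.
move=> [|[|k]] // _; rewrite ratio_inv_lt ?subn_gt0 //; split.
  exact: (Q_order_gt hdelta ltm' hedge hT' hp_low hp_lead hqg steep).
exact: (Q_order_le hdelta ltm' hedge hT' hp_low hp_lead hqg).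
Qed.
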